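(* Let $G$ be a nontrivial finite abelian $p$-group of rank $n$ with $n\le p-1$. Then $\tau(G)=n+1$.
   Context: The rank is the minimal number of generators. A projective representation of $G$ is an $\alpha$-representation for some cocycle $\alpha\in Z^2(G,\mathbb{C}^\times)$: a map $\rho:G\to\mathrm{GL}_m(\mathbb{C})$ with $\rho(1)=I$ and $\rho(g)\rho(h)=\alpha(g,h)\rho(gh)$; it is faithful if the only $g$ with $\rho(g)$ scalar is $g=1$. $\tau(G)$ is the least degree of a faithful projective representation of $G$. *)

From mathcomp Require Import all_boot all_algebra all_fingroup.
From mathcomp Require Import Rstruct complex.
Set Implicit Arguments. Unset Strict Implicit. Unset Printing Implicit Defensive.
Import GRing.Theory Num.Theory.

Definition CC : numClosedFieldType := complex Rdefinitions.R.

Local Open Scope ring_scope.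

Section Defs.
Variable gT : finGroupType.

Definition generates (G : {set gT}) (s : seq gT) : Prop :=
  <<[set x in s]>>%g = G.

Definition has_rank (G : {set gT}) (n : nat) : Prop :=
  (exists s : seq gT, size s = n /\ generates G s) /\
  (forall s : seq gT, generates G s -> (n <= size s)%N).

Definition is_cocycle (G : {set gT}) (alpha : gT -> gT -> CC) : Prop :=
  {in G &, forall g h, alpha g h != 0} /\
  {in G & G & G, forall g h k,
     alpha g h * alpha (g * h)%g k = alpha h k * alpha g (h * k)%g}.

Definition is_alpha_rep (G : {set gT}) (m : nat) (alpha : gT -> gT -> CC)
    (rho : gT -> 'M[CC]_m) : Prop :=
  rho 1%g = 1%:M /\
  {in G, forall g, rho g \in unitmx} /\
  {in G &, forall g h, rho g *m rho h = alpha g h *: rho (g * h)%g}.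

Definition is_proj_rep (G : {set gT}) (m : nat) (rho : gT -> 'M[CC]_m) : Prop :=
  exists alpha, is_cocycle G alpha /\ is_alpha_rep G alpha rho.

Definition proj_faithful (G : {set gT}) (m : nat) (rho : gT -> 'M[CC]_m) : Prop :=
  {in G, forall g, is_scalar_mx (rho g) -> g = 1%g}.

Definition tau_eq (G : {set gT}) (t : nat) : Prop :=
  (exists rho : gT -> 'M[CC]_t, is_proj_rep G rho /\ proj_faithful G rho) /\
  (forall (m : nat) (rho : gT -> 'M[CC]_m),
     is_proj_rep G rho -> proj_faithful G rho -> (t <= m)%N).

End Defs.

From mathcomp Require Import all_boot all_algebra all_fingroup all_solvable all_field.
Set Implicit Arguments. Unset Strict Implicit. Unset Printing Implicit Defensive.
Import GRing.Theory Num.Theory.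
Local Open Scope ring_scope.

(* Upper bound: an abelian group of rank n is a direct product of n cyclic
   groups, and n characters separating its points, put on a diagonal next to
   a 1, form a faithful ordinary (hence projective) representation of degree
   n + 1.
   Lower bound: let rho be a faithful alpha-representation of degree d.  If
   alpha(g, h) <> alpha(h, g) for some g, h, then rho g and rho h commute up to
   a scalar w <> 1; as rho g ^+ #[g] is scalar, the order of w is a power of p,
   and taking determinants it divides d, so d >= p > n.  Otherwise rho(G) is
   a commuting family of diagonalizable matrices; after diagonalizing it
   simultaneously, the ratios of the diagonal entries to the first one are
   d - 1 characters separating the points of G.  On 'Ohm_1(G) they take p-th
   roots of unity as values, whence p ^ n = #|'Ohm_1(G)| <= p ^ (d - 1). *)

Lemma has_rank_grank (gT : finGroupType) (G : {group gT}) n :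
  has_rank G n -> n = 'm(G)%g.
Proof.
case=> [[s [<- genG]] min_n]; apply/eqP; rewrite eqn_leq; apply/andP; split.
  have [B genB <-] := grank_witness G; rewrite cardE; apply: min_n.
  by rewrite /generates -genB; congr <<_>>%g; apply/setP=> x; rewrite inE mem_enum.
by have := grank_min [set x in s]; rewrite genG => /leq_trans->//; rewrite cardsE card_size.
Qed.

Lemma closed_field_prim_root (F : closedFieldType) n :
  n%:R != 0 :> F -> {z : F | n.-primitive_root z}.
Proof.
move=> n_neq0; have n_gt0 : (0 < n)%N by rewrite lt0n; apply: contraNneq n_neq0 => ->.
have [r Dp] := closed_field_poly_normal ('X^n - 1 : {poly F}).
rewrite (monicP (monicXnsubC 1 n_gt0)) scale1r in Dp.
have r_unity : all n.-unity_root r by apply/allP=> z; rewrite -root_prod_XsubC -Dp.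
have size_r : (n < (size r).+1)%N by rewrite -(size_prod_XsubC r id) -Dp size_XnsubC.
apply/sigW; have [|z] := hasP (has_prim_root n_gt0 r_unity _ size_r); last by exists z.
by rewrite -separable_prod_XsubC -Dp separable_Xn_sub_1.
Qed.

Lemma diagonalizable_unity_root (F : closedFieldType) n (A : 'M[F]_n.+1) N :
  N%:R != 0 :> F -> A ^+ N = 1 -> diagonalizable A.
Proof.
move=> N_neq0 AN1; have N_gt0 : (0 < N)%N by rewrite lt0n; apply: contraNneq N_neq0 => ->.
have [r Dp] := closed_field_poly_normal ('X^N - 1 : {poly F}).
rewrite (monicP (monicXnsubC 1 N_gt0)) scale1r in Dp.
apply/diagonalizableP; exists r.
  by rewrite -separable_prod_XsubC -Dp separable_Xn_sub_1.
rewrite -Dp; apply: mxminpoly_min.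
by rewrite rmorphB rmorphXn /= horner_mx_X AN1 rmorph1 subrr.
Qed.

Lemma diagonalizable_scalar_pow (F : numClosedFieldType) n (A : 'M[F]_n.+1) N c :
  (0 < N)%N -> c != 0 -> A ^+ N = c%:M -> diagonalizable A.
Proof.
move=> N_gt0 c_neq0 ANc; set d := N.-root c.
have dN : d ^+ N = c by rewrite rootCK.
have d_neq0 : d != 0 by apply: contraNneq c_neq0 => d0; rewrite -dN d0 expr0n gtn_eqF.
have dA_unity : (d^-1 *: A) ^+ N = 1.
  by rewrite exprZn ANc exprVn dN scale_scalar_mx mulVf.
have [|P P_unit /similar_diagPex[e]] := diagonalizable_unity_root _ dA_unity.
  by rewrite pnatr_eq0 -lt0n.
rewrite /similar_to conjumx // -scalemxAr -scalemxAl => /eqP De.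
exists P => //; apply/similar_diagPex; exists (d *: e); apply/eqP.
by rewrite conjumx // -(scalerKV d_neq0 (P *m A *m invmx P)) De linearZ.
Qed.

Lemma skew_commXl (R : comNzRingType) (V : algType R) (a b : V) (w : R) k :
  a * b = w *: (b * a) -> a ^+ k * b = w ^+ k *: (b * a ^+ k).
Proof.
move=> ab; elim: k => [|k IHk]; first by rewrite !expr0 mul1r mulr1 scale1r.
rewrite exprS -mulrA IHk -scalerAr [a * (b * _)]mulrA ab -scalerAl scalerA.
by rewrite -exprSr -mulrA -exprS.
Qed.

Lemma skew_comm_det (F : fieldType) n (A B : 'M[F]_n) w :
  A \in unitmx -> B \in unitmx -> A *m B = w *: (B *m A) -> w ^+ n = 1.
Proof.
rewrite !unitmxE !unitfE => detA detB /(congr1 determinant).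
rewrite detZ !det_mulmx mulrC -{1}[_ * _]mul1r => /mulIf-> //.
by rewrite mulf_neq0.
Qed.

Lemma skew_comm_scalar_pow (F : fieldType) n (A B : 'M[F]_n.+1) w k c :
  B \in unitmx -> A *m B = w *: (B *m A) -> A ^+ k = c%:M -> c != 0 -> w ^+ k = 1.
Proof.
move=> B_unit AB Ak c_neq0; have B_neq0 : B != 0.
  by apply: contraTneq B_unit => ->; rewrite unitmxE det0 unitr0.
have /eqP := skew_commXl k AB; rewrite Ak -!mulmxE mul_scalar_mx mul_mx_scalar.
rewrite scalerA -subr_eq0 -scalerBl scaler_eq0 (negPf B_neq0) orbF subr_eq0.
by rewrite -{1}[c]mul1r (inj_eq (mulIf c_neq0)) eq_sym => /eqP.
Qed.

Lemma unity_root_pfactor_dvd (R : idomainType) (w : R) p e N :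
  prime p -> w != 1 -> w ^+ (p ^ e) = 1 -> w ^+ N = 1 -> (p %| N)%N.
Proof.
move=> p_pr w_neq1 wpe /eqP wN; have pe_gt0 : (0 < p ^ e)%N by rewrite expn_gt0 prime_gt0.
have [d dP /(dvdn_pfactor _ _ p_pr)[[|j] _ dj]] := prim_order_exists pe_gt0 wpe.
  by move: w_neq1; rewrite -(prim_expr_order dP) dj expr1 eqxx.
by apply: dvdn_trans (_ : d %| N)%N; rewrite ?(prim_order_dvd dP) // dj dvdn_exp.
Qed.

Definition separating_chars (R : nzRingType) (gT : finGroupType) (G : {set gT}) k
    (chi : 'I_k -> gT -> R) : Prop :=
  [/\ forall i, {in G &, {morph chi i : x y / (x * y)%g >-> x * y}},
      forall i, chi i 1%g = 1 &
      {in G, forall x, (forall i, chi i x = 1) -> x = 1%g}].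

Section CyclicChar.
Variables (R : idomainType) (gT : finGroupType) (a : gT) (z : R).
Hypothesis z_prim : #[a]%g.-primitive_root z.

Definition cyc_log (y : gT) : nat := index y (mkseq (fun k => a ^+ k)%g #[a]%g).

Lemma expg_cyc_log k : (a ^+ cyc_log (a ^+ k))%g = (a ^+ k)%g.
Proof.
have ak_in : (a ^+ k)%g \in mkseq (fun k => a ^+ k)%g #[a]%g.
  rewrite -expg_mod_order; apply/mapP; exists (k %% #[a]%g)%N => //.
  by rewrite mem_iota ltn_mod order_gt0.
have log_lt : (cyc_log (a ^+ k) < #[a]%g)%N.
  by rewrite -[X in (_ < X)%N](size_mkseq (fun k => a ^+ k)%g) index_mem.
by have := nth_index 1%g ak_in; rewrite nth_mkseq.
Qed.

Definition cyc_char (y : gT) : R := z ^+ cyc_log y.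

Lemma cyc_charX k : cyc_char (a ^+ k) = z ^+ k.
Proof. by apply/eqP; rewrite (eq_prim_root_expr z_prim) -eq_expg_mod_order expg_cyc_log. Qed.

Lemma cyc_charM : {in <[a]>%g &, {morph cyc_char : x y / (x * y)%g >-> x * y}}.
Proof. by move=> _ _ /cycleP[i ->] /cycleP[j ->]; rewrite -expgD !cyc_charX exprD. Qed.

Lemma cyc_char1 : cyc_char 1 = 1.
Proof. by rewrite -(expg0 a) cyc_charX. Qed.

Lemma cyc_char_faithful : {in <[a]>%g, forall y, cyc_char y = 1 -> y = 1%g}.
Proof.
by move=> _ /cycleP[k ->] /eqP; rewrite cyc_charX -(prim_order_dvd z_prim) order_dvdn => /eqP.
Qed.

End CyclicChar.

Lemma dprod_cycles_separating_chars (F : numClosedFieldType) (gT : finGroupType)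
    (b : seq gT) (G : {group gT}) :
  (\big[dprod/1]_(x <- b) <[x]>)%g = G ->
  exists chi : 'I_(size b) -> gT -> F, separating_chars G chi.
Proof.
elim: b G => [|a b IHb] G.
  rewrite big_nil => <-; exists (fun _ _ => 1); split=> // [i x y _ _|x /set1gP //].
  by rewrite mulr1.
rewrite big_cons => defG; have [[K H defK defH] _ _ _] := dprodP defG.
rewrite defK defH in defG; have [chi [chiM chi1 chi_sep]] := IHb H defH.
have [z z_prim] : {z : F | #[a]%g.-primitive_root z}.
  by apply: closed_field_prim_root; rewrite pnatr_eq0 -lt0n order_gt0.
have [nsKG _] := dprod_normal2 defG.
have [_ KH cKH tiKH] := dprodP defG.
have cplH : H \in [complements to K in G]%g by apply/complP.
exists (fun i x => if unlift ord0 i is Some j then chi j (remgr K H x)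
                  else cyc_char a z (divgr K H x)); split.
- move=> i x y Gx Gy; case: (unlift ord0 i) => [j|] /=.
    by rewrite (remgrM cplH nsKG) //; apply: chiM; rewrite mem_remgr ?KH.
  by rewrite (divgrM cplH cKH) //; apply: (cyc_charM z_prim); rewrite defK mem_divgr ?KH.
- move=> i; case: (unlift ord0 i) => [j|] /=; first by rewrite remgr1.
  by rewrite /divgr remgr1 // invg1 mulg1 (cyc_char1 z_prim).
move=> x Gx chi_x1; rewrite (divgr_eq K H x).
have -> : divgr K H x = 1%g.
  apply: (cyc_char_faithful z_prim); first by rewrite defK mem_divgr ?KH.
  by have := chi_x1 ord0; rewrite unlift_none.
rewrite (chi_sep (remgr K H x)) ?mulg1 // ?mem_remgr ?KH // => j.
by have := chi_x1 (lift ord0 j); rewrite liftK.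
Qed.

Lemma p_rank_le_separating_chars (F : fieldType) (gT : finGroupType)
    (G : {group gT}) p k (chi : 'I_k -> gT -> F) (z : F) :
  prime p -> p.-primitive_root z -> (p.-group G)%g -> abelian G ->
  separating_chars G chi -> ('r_p(G)%g <= k)%N.
Proof.
move=> p_pr z_prim pG cGG [chiM chi1 chi_sep].
have OhmP x : x \in 'Ohm_1(G)%g -> x \in G /\ (x ^+ p = 1)%g.
  rewrite (OhmEabelian pG (abelianS (Ohm_sub 1 G) cGG)) !inE expn1.
  by case/andP=> -> /eqP.
have chiX i x m : x \in G -> chi i (x ^+ m)%g = chi i x ^+ m.
  move=> Gx; elim: m => [|m IHm]; first by rewrite expg0 chi1 expr0.
  by rewrite expgS chiM ?groupX // IHm exprS.
pose roots := mkseq (fun j => z ^+ j) p.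
have chi_root i x : x \in 'Ohm_1(G)%g -> chi i x \in roots.
  case/OhmP=> Gx xp1; have /(prim_rootP z_prim)[j ->] : chi i x ^+ p = 1.
    by rewrite -chiX // xp1 chi1.
  by rewrite -(nth_mkseq 0 (fun j => z ^+ j) (ltn_ord j)) mem_nth ?size_mkseq.
have index_lt t : t \in roots -> (index t roots < p.-1.+1)%N.
  by rewrite prednK ?prime_gt0 // -[X in (_ < X)%N](size_mkseq (fun j => z ^+ j)) index_mem.
pose Phi x : {ffun 'I_k -> 'I_p.-1.+1} := [ffun i => inord (index (chi i x) roots)].
have Phi_inj : {in 'Ohm_1(G)%g &, injective Phi}.
  move=> x y Ex Ey /ffunP eqPhi; have [[Gx _] [Gy _]] := (OhmP x Ex, OhmP y Ey).
  apply/eqP; rewrite eq_mulgV1; apply/eqP/chi_sep => [|i]; first by rewrite groupM ?groupV.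
  have := congr1 (@nat_of_ord _) (eqPhi i); rewrite !ffunE !inordK ?index_lt ?chi_root //.
  move/(congr1 (nth 0 roots)); rewrite !nth_index ?chi_root // => chi_xy.
  by rewrite chiM ?groupV // chi_xy -chiM ?groupV // mulgV chi1.
have card_Ohm : (#|'Ohm_1(G)%g| <= p ^ k)%N.
  rewrite -(card_in_imset Phi_inj); apply: leq_trans (max_card _) _.
  by rewrite card_ffun !card_ord prednK ?prime_gt0.
rewrite (p_rank_abelian p cGG) -(leq_exp2l _ _ (prime_gt1 p_pr)).
by rewrite -card_pgroup // (pgroupS (Ohm_sub 1 G) pG).
Qed.

Lemma faithful_proj_rep_of_chars (gT : finGroupType) (G : {group gT}) k
    (chi : 'I_k -> gT -> CC) :
  separating_chars G chi ->
  exists rho : gT -> 'M[CC]_k.+1, is_proj_rep G rho /\ proj_faithful G rho.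
Proof.
case=> chiM chi1 chi_sep.
pose rho x : 'M[CC]_k.+1 :=
  diag_mx (\row_i if unlift ord0 i is Some j then chi j x else 1).
have rho1 : rho 1%g = 1%:M.
  by rewrite -diag_const_mx; congr diag_mx; apply/rowP=> i; rewrite !mxE; case: unlift.
have rhoM : {in G &, forall x y, rho x *m rho y = rho (x * y)%g}.
  move=> x y Gx Gy; rewrite mulmx_diag; congr diag_mx; apply/rowP=> i.
  by rewrite !mxE; case: unlift => [j|]; rewrite ?chiM ?mulr1.
exists rho; split.
  exists (fun _ _ => 1); split.
    by split=> [g h _ _|g h l _ _ _]; rewrite ?oner_eq0 ?mulr1.
  split=> //; split=> [x Gx|x y Gx Gy]; last by rewrite scale1r rhoM.
  by have := rhoM x x^-1%g Gx (groupVr Gx); rewrite mulgV rho1 => /mulmx1_unit[].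
move=> x Gx /is_scalar_mxP[c rho_x]; apply: chi_sep => // j.
have := congr1 (fun A : 'M_k.+1 => A (lift ord0 j) (lift ord0 j)) rho_x.
have := congr1 (fun A : 'M_k.+1 => A ord0 ord0) rho_x.
by rewrite /= /rho !mxE !eqxx liftK unlift_none /= => <-; rewrite !mulr1n.
Qed.

Lemma twisted_ratioM (F : fieldType) (a u1 u2 u v1 v2 v : F) :
  a != 0 -> u1 * u2 = a * u -> v1 * v2 = a * v -> u / v = (u1 / v1) * (u2 / v2).
Proof. by move=> a_neq0 Du Dv; rewrite mulf_div Du Dv invfM mulrACA mulfV ?mul1r. Qed.

Section ProjectiveRepresentation.
Variables (gT : finGroupType) (G : {group gT}) (m : nat).
Variables (alpha : gT -> gT -> CC) (rho : gT -> 'M[CC]_m.+1).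
Hypotheses (alpha_cocycle : is_cocycle G alpha) (rho_rep : is_alpha_rep G alpha rho).

Let alpha_neq0 : {in G &, forall g h, alpha g h != 0}.
Proof. by case: alpha_cocycle. Qed.
Let rho1 : rho 1%g = 1%:M. Proof. by case: rho_rep. Qed.
Let rho_unit : {in G, forall g, rho g \in unitmx}. Proof. by case: rho_rep => _ []. Qed.
Let rhoM : {in G &, forall g h, rho g *m rho h = alpha g h *: rho (g * h)%g}.
Proof. by case: rho_rep => _ []. Qed.

Lemma proj_rep_expg g k : g \in G -> exists2 c, c != 0 & rho g ^+ k = c *: rho (g ^+ k)%g.
Proof.
move=> Gg; elim: k => [|k [c c_neq0 IHk]]; first by exists 1; rewrite ?oner_eq0 ?scale1r.
exists (c * alpha (g ^+ k)%g g); first by rewrite mulf_neq0 ?alpha_neq0 ?groupX.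
by rewrite exprSr IHk -mulmxE -scalemxAl rhoM ?groupX // scalerA expgSr.
Qed.

Lemma proj_rep_order_scalar g : g \in G -> exists2 c, c != 0 & rho g ^+ #[g]%g = c%:M.
Proof.
move=> Gg; have [c c_neq0 ->] := proj_rep_expg #[g]%g Gg.
by exists c; rewrite // expg_order rho1 scale_scalar_mx mulr1.
Qed.

Lemma proj_rep_skew_comm g h : g \in G -> h \in G -> commute g h ->
  rho g *m rho h = (alpha g h / alpha h g) *: (rho h *m rho g).
Proof.
by move=> Gg Gh cgh; rewrite !rhoM // scalerA divfK ?alpha_neq0 // cgh.
Qed.

Lemma proj_rep_asym_dvd p g h : prime p -> (p.-elt g)%g -> g \in G -> h \in G ->
  commute g h -> alpha g h != alpha h g -> (p %| m.+1)%N.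
Proof.
move=> p_pr p_g Gg Gh cgh asym_gh; set w := alpha g h / alpha h g.
have w_neq1 : w != 1 by rewrite /w (can2_eq (divfK _) (mulfK _)) ?alpha_neq0 ?mul1r.
have skew_gh := proj_rep_skew_comm Gg Gh cgh.
have wm : w ^+ m.+1 = 1 by apply: skew_comm_det skew_gh; apply: rho_unit.
have [c c_neq0 rho_g_ord] := proj_rep_order_scalar Gg.
have wg : w ^+ #[g]%g = 1 by apply: skew_comm_scalar_pow (rho_unit Gh) skew_gh rho_g_ord c_neq0.
have [e ge] := p_natP p_g; rewrite ge in wg.
exact: unity_root_pfactor_dvd p_pr w_neq1 wg wm.
Qed.

Section Diagonalization.

Variable P : 'M[CC]_m.+1.
Hypothesis P_unit : P \in unitmx.
Hypothesis P_diag : {in G, forall x, is_diag_mx (conjmx P (rho x))}.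

Let conjmx_rhoM : {in G &, forall x y,
  conjmx P (rho x) *m conjmx P (rho y) = alpha x y *: conjmx P (rho (x * y)%g)}.
Proof.
move=> x y Gx Gy; rewrite -conjmxM ?inE ?stablemx_unit // rhoM //.
by rewrite /conjmx -scalemxAr -scalemxAl.
Qed.

Let lambda i x := conjmx P (rho x) i i.

Let lambdaM i : {in G &, forall x y, lambda i x * lambda i y = alpha x y * lambda i (x * y)%g}.
Proof.
move=> x y Gx Gy; rewrite /lambda; have /diag_mxP[d Dx] := P_diag Gx.
have := congr1 (fun A : 'M_m.+1 => A i i) (conjmx_rhoM Gx Gy).
by rewrite /= Dx mul_diag_mx [in X in X = _]mxE [diag_mx d i i]mxE eqxx mulr1n => ->; rewrite mxE.
Qed.

Definition diag_ratio j x := lambda (lift ord0 j) x / lambda ord0 x.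

Lemma diag_ratio_separating : proj_faithful G rho -> separating_chars G diag_ratio.
Proof.
move=> rho_faithful.
have lambda1 i : lambda i 1%g = 1.
  by rewrite /lambda rho1 conjmx_scalar ?row_free_unit // mxE eqxx.
split=> [j x y Gx Gy|j|x Gx ratio_x1].
- exact: twisted_ratioM (alpha_neq0 Gx Gy) (lambdaM _ Gx Gy) (lambdaM _ Gx Gy).
- by rewrite /diag_ratio !lambda1 divr1.
apply: rho_faithful => //; have /diag_mxP[d Dx] := P_diag Gx.
have Dx_scalar : conjmx P (rho x) = (lambda ord0 x)%:M.
  rewrite Dx -diag_const_mx; congr diag_mx; apply/rowP=> i; rewrite mxE.
  have lambda_d k : lambda k x = d 0 k by rewrite /lambda Dx mxE eqxx.
  case: (unliftP ord0 i) => [j ->|->]; last by rewrite lambda_d.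
  by rewrite -!lambda_d; apply: divr1_eq; apply: ratio_x1.
apply/is_scalar_mxP; exists (lambda ord0 x).
by rewrite -(conjmxK (rho x) P_unit) Dx_scalar conjmx_scalar ?row_free_unit ?unitmx_inv.
Qed.

End Diagonalization.

Section SymmetricCocycle.

Hypothesis alpha_sym : {in G &, forall g h, alpha g h = alpha h g}.

Lemma proj_rep_sym_codiag : abelian G ->
  exists2 P, P \in unitmx & {in G, forall x, is_diag_mx (conjmx P (rho x))}.
Proof.
move=> cGG; have [P P_unit /allP diagP] : codiagonalizable [seq rho x | x <- enum G].
  apply/codiagonalizableP.
  split=> [_ _ /mapP[x + ->] /mapP[y + ->]|_ /mapP[x + ->]]; rewrite !mem_enum.
    by move=> Gx Gy; rewrite /comm_mx !rhoM // alpha_sym // (centsP cGG x Gx y Gy).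
  move=> Gx; have [c c_neq0 ord_x] := proj_rep_order_scalar Gx.
  exact: diagonalizable_scalar_pow (order_gt0 x) c_neq0 ord_x.
by exists P => // x Gx; apply: (diagP (rho x)); rewrite map_f ?mem_enum.
Qed.

Lemma proj_rep_sym_p_rank p : prime p -> (p.-group G)%g -> abelian G ->
  proj_faithful G rho -> ('r_p(G)%g <= m)%N.
Proof.
move=> p_pr pG cGG rho_faithful; have [P P_unit P_diag] := proj_rep_sym_codiag cGG.
have [z z_prim] : {z : CC | p.-primitive_root z}.
  by apply: closed_field_prim_root; rewrite pnatr_eq0 -lt0n prime_gt0.
exact: p_rank_le_separating_chars p_pr z_prim pG cGG
  (diag_ratio_separating P_unit P_diag rho_faithful).
Qed.

End SymmetricCocycle.

Lemma proj_rep_rank_le p : prime p -> (p.-group G)%g -> abelian G ->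
  proj_faithful G rho -> ('r(G)%g < p)%N -> ('r(G)%g <= m)%N.
Proof.
move=> p_pr pG cGG rho_faithful rG_lt_p.
case: (boolP [exists g in G, exists h in G, alpha g h != alpha h g]).
  case/exists_inP=> g Gg /exists_inP[h Gh asym_gh].
  have := proj_rep_asym_dvd p_pr (mem_p_elt pG Gg) Gg Gh (centsP cGG g Gg h Gh) asym_gh.
  by move/(dvdn_leq (ltn0Sn m)); apply: leq_trans rG_lt_p.
move=> no_asym; have alpha_sym : {in G &, forall g h, alpha g h = alpha h g}.
  move=> g h Gg Gh; apply/eqP; apply: contraNT no_asym => asym_gh.
  by apply/exists_inP; exists g => //; apply/exists_inP; exists h.
by rewrite (rank_pgroup pG); apply: proj_rep_sym_p_rank.
Qed.

End ProjectiveRepresentation.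

Lemma abelian_faithful_proj_rep (gT : finGroupType) (G : {group gT}) :
  abelian G ->
  exists rho : gT -> 'M[CC]_(('r(G)%g).+1), is_proj_rep G rho /\ proj_faithful G rho.
Proof.
move=> cGG; have [b defG typeG] := abelian_structure cGG.
have <- : size b = 'r(G)%g by rewrite -size_abelian_type // -typeG size_map.
have [chi chi_sep] := dprod_cycles_separating_chars CC defG.
exact: faithful_proj_rep_of_chars chi_sep.
Qed.

Theorem lemma4p8 (gT : finGroupType) (G : {group gT}) (p n : nat) :
  prime p -> (p.-group G)%g -> abelian G -> (G :!=: 1)%g ->
  has_rank G n -> (n <= p - 1)%N ->
  tau_eq G n.+1.
Proof.
move=> p_pr pG cGG ntG rank_n n_le_p1.
have n_rank : n = 'r(G)%g by rewrite (has_rank_grank rank_n) grank_abelian.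
split; first by rewrite n_rank; apply: abelian_faithful_proj_rep.
move=> [|m] rho [alpha [alpha_cocycle rho_rep]] rho_faithful.
  have [g Gg] := trivgPn _ ntG.
  by rewrite (rho_faithful g Gg) ?eqxx // [rho g]flatmx0 mx0_is_scalar.
rewrite ltnS n_rank; apply: (proj_rep_rank_le alpha_cocycle rho_rep p_pr pG cGG rho_faithful).
by rewrite -n_rank -(prednK (prime_gt0 p_pr)) ltnS -subn1.
Qed.
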